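(* Let $F=H_{(44/31,44/31,3)}:\mathbb{C}^2\to\mathbb{C}^2$ be the map $F(x,y)=\left(x^6+\frac{44}{31}y^3-y,\ y^6+\frac{44}{31}x^3-x\right)$. For $z=(z_1,z_2)\in\mathbb{C}^2$ (at which the matrix below is invertible) let $$M_{-1}(z)=\begin{bmatrix}6z_1^5 & \frac{132}{31}z_2^2-1\\ \frac{132}{31}z_1^2-1 & 6z_2^5\end{bmatrix}^{-1},$$ and for $k\in\{2,\dots,6\}$ let $$M_k(z)=\begin{bmatrix}\binom{6}{k}z_1^{6-k} & \frac{44}{31}\binom{3}{k}z_2^{3-k}\\ \frac{44}{31}\binom{3}{k}z_1^{3-k} & \binom{6}{k}z_2^{6-k}\end{bmatrix},$$ where $\binom{j}{i}=0$ when $i\notin\{0,\dots,j\}$. If $$\sigma\big(M_{-1}(z)M_k(z)\big)<\left(\frac{0.03}{|M_{-1}(z)F(z)|}\right)^{k-1}\quad\text{for all }k\in\{2,\dots,6\},$$ then $\alpha(F,z)<0.03$.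
   Context: For a square matrix $M$, $\sigma(M)$ denotes its largest singular value. For $v\in\mathbb{C}^N$, $|v|=\sqrt{|v_1|^2+\cdots+|v_N|^2}$, and for a multilinear map $\mathcal{L}:(\mathbb{C}^N)^k\to\mathbb{C}^N$, $|\mathcal{L}|=\max_{v^1,\dots,v^k\neq 0}\frac{|\mathcal{L}(v^1,\dots,v^k)|}{|v^1|\cdots|v^k|}$. For an analytic $F:\mathbb{C}^n\to\mathbb{C}^n$ with Jacobian $F'$ and $k$-th derivative $F^{(k)}$ (a symmetric $k$-linear map), Smale's invariants are $\beta(F,z)=|F'(z)^{-1}F(z)|$, $\gamma(F,z)=\sup_{k\ge2}\left|\frac{1}{k!}F'(z)^{-1}F^{(k)}(z)\right|^{1/(k-1)}$, and $\alpha(F,z)=\beta(F,z)\gamma(F,z)$. *)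

From HB Require Import structures.
From mathcomp Require Import all_boot all_order all_algebra.
From mathcomp Require Import classical_sets reals.
From mathcomp Require Import complex.
From mathcomp Require Import mpoly.

Set Implicit Arguments.
Unset Strict Implicit.
Unset Printing Implicit Defensive.

Import Order.TTheory GRing.Theory Num.Theory.
Local Open Scope ring_scope.
Local Open Scope classical_set_scope.

Section Smale.
Variable R : realType.
Local Notation C := (R[i]).

Definition vnorm (n : nat) (v : 'cV[C]_n) : R :=
  Num.sqrt (\sum_(i < n) (Normc.normc (v i ord0)) ^+ 2).

(* largest singular value = operator norm for the Euclidean norm *)
Definition sigma (n : nat) (M : 'M[C]_n) : R :=
  sup [set r | exists v : 'cV[C]_n, v != 0 /\ r = vnorm (M *m v) / vnorm v].

Definition mlnorm (n k : nat) (L : ('I_k -> 'cV[C]_n) -> 'cV[C]_n) : R :=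
  sup [set r | exists vs : 'I_k -> 'cV[C]_n,
    (forall l, vs l != 0) /\ r = vnorm (L vs) / \prod_(l < k) vnorm (vs l)].

Definition nroot (m : nat) (x : R) : R :=
  sup [set y | 0 <= y /\ y ^+ m <= x].

Definition polymap (n : nat) := 'I_n -> {mpoly C[n]}.

Definition pt (n : nat) (z : 'cV[C]_n) : 'I_n -> C := fun j => z j ord0.

Definition peval (n : nat) (F : polymap n) (z : 'cV[C]_n) : 'cV[C]_n :=
  \col_(i < n) (F i).@[pt z].

Definition jacobian (n : nat) (F : polymap n) (z : 'cV[C]_n) : 'M[C]_n :=
  \matrix_(i < n, j < n) ((F i)^`M(j)).@[pt z].

Definition mderivs (n : nat) (s : seq 'I_n) (p : {mpoly C[n]}) : {mpoly C[n]} :=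
  foldr (fun i q => q^`M(i)) p s.

Definition kderiv (n : nat) (F : polymap n) (k : nat) (z : 'cV[C]_n)
  (vs : 'I_k -> 'cV[C]_n) : 'cV[C]_n :=
  \col_(i < n) \sum_(js : {ffun 'I_k -> 'I_n})
     (mderivs [seq js l | l <- enum 'I_k] (F i)).@[pt z] *
     \prod_(l < k) vs l (js l) ord0.

Definition beta (n : nat) (F : polymap n) (z : 'cV[C]_n) : R :=
  vnorm (invmx (jacobian F z) *m peval F z).

Definition gamma (n : nat) (F : polymap n) (z : 'cV[C]_n) : R :=
  sup [set g | exists k : nat, (2 <= k)%N /\
    g = nroot k.-1 (mlnorm (fun vs : 'I_k -> 'cV[C]_n =>
          ((k`!)%:R : C)^-1 *: (invmx (jacobian F z) *m @kderiv n F k z vs)))].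

Definition alpha (n : nat) (F : polymap n) (z : 'cV[C]_n) : R :=
  beta F z * gamma F z.

Definition c4431 : C := 44%:R / 31%:R.

Definition Hmap : polymap 2 := fun i =>
  if i == ord0 then 'X_ord0 ^+ 6 + c4431 *: 'X_ord_max ^+ 3 - 'X_ord_max
  else 'X_ord_max ^+ 6 + c4431 *: 'X_ord0 ^+ 3 - 'X_ord0.

Definition mx22 (a b c d : C) : 'M[C]_2 :=
  \matrix_(i < 2, j < 2)
    (if i == ord0 then (if j == ord0 then a else b)
     else (if j == ord0 then c else d)).

(* the matrix whose inverse is M_{-1}(z) *)
Definition Jexpl (z : 'cV[C]_2) : 'M[C]_2 :=
  let z1 := z ord0 ord0 in let z2 := z ord_max ord0 in
  mx22 (6%:R * z1 ^+ 5) (132%:R / 31%:R * z2 ^+ 2 - 1)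
       (132%:R / 31%:R * z1 ^+ 2 - 1) (6%:R * z2 ^+ 5).

Definition Mk (k : nat) (z : 'cV[C]_2) : 'M[C]_2 :=
  let z1 := z ord0 ord0 in let z2 := z ord_max ord0 in
  mx22 ('C(6, k)%:R * z1 ^+ (6 - k)) (c4431 * 'C(3, k)%:R * z2 ^+ (3 - k))
       (c4431 * 'C(3, k)%:R * z1 ^+ (3 - k)) ('C(6, k)%:R * z2 ^+ (6 - k)).

End Smale.

From HB Require Import structures.
From mathcomp Require Import all_boot all_order all_algebra.
From mathcomp Require Import boolp classical_sets reals.
From mathcomp Require Import complex.
From mathcomp Require Import mpoly.
From mathcomp Require Import ring lra.
Import Order.TTheory GRing.Theory Num.Theory.
Local Open Scope ring_scope.

(* Every component of F is a sum of powers of a single variable, so for k >= 2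
   F^(k)(z)(v^1,...,v^k) = k! M_k(z) (v^1 * ... * v^k), with * the entrywise
   product of vectors, whose norm is at most |v^1|...|v^k|.  Hence the k-th
   term of gamma(F,z) is at most sigma(M_{-1} M_k)^(1/(k-1)) < 0.03/beta(F,z)
   for 2 <= k <= 6, while M_k = 0 for k > 6.  Only finitely many terms are
   positive, so the supremum gamma(F,z) is still < 0.03/beta(F,z). *)

Lemma mderivXn (K : comNzRingType) (n : nat) (i j : 'I_n) (e : nat) :
  ('X_i ^+ e : {mpoly K[n]})^`M(j) = if i == j then e%:R *: 'X_i ^+ e.-1 else 0.
Proof.
have mderivX1 : ('X_i : {mpoly K[n]})^`M(j) = ((i == j)%:R : K) *: 1.
  rewrite mderivX mnm1E; case: eqP => [->|_]; last by rewrite !scale0r.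
  have -> : (U_(j) - U_(j))%MM = 0%MM.
    by apply/mnmP => l; rewrite mnmBE mnm0E subnn.
  by rewrite mpolyX0.
elim: e => [|e IH].
  by rewrite expr0 -mpolyC1 mderivC; case: eqP; rewrite ?scale0r.
rewrite exprS mderivM IH mderivX1; case: eqP => _; last first.
  by rewrite scale0r mul0r mulr0 addr0.
rewrite scale1r mul1r -scalerAr; case: e {IH} => [|e] /=.
  by rewrite scale0r addr0 expr0 scale1r.
by rewrite -exprS -[in RHS](addn1 e.+1) natrD addrC scalerDl scale1r.
Qed.

Lemma all_pred1_ffun (k n : nat) (js : {ffun 'I_k -> 'I_n}) (a : 'I_n) :
  all (pred1 a) [seq js l | l <- enum 'I_k] = (js == [ffun=> a]).
Proof.
rewrite all_map; apply/allP/eqP => [js_a|-> l _]; last by rewrite /= ffunE.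
by apply/ffunP => l; rewrite ffunE; apply/eqP/js_a; rewrite mem_enum.
Qed.

Section IteratedDerivatives.
Context {R : realType} {n : nat}.
Implicit Types (s : seq 'I_n) (p q : {mpoly R[i][n]}) (z : 'cV[R[i]]_n).

Lemma mderivsD s p q : mderivs s (p + q) = mderivs s p + mderivs s q.
Proof. by elim: s => //= j s ->; rewrite mderivD. Qed.

Lemma mderivsB s p q : mderivs s (p - q) = mderivs s p - mderivs s q.
Proof. by elim: s => //= j s ->; rewrite mderivB. Qed.

Lemma mderivsZ s c p : mderivs s (c *: p) = c *: mderivs s p.
Proof. by elim: s => //= j s ->; rewrite mderivZ. Qed.

Lemma meval_mderivsXn s (j : 'I_n) (e : nat) (v : 'I_n -> R[i]) :
  (mderivs s ('X_j ^+ e)).@[v] =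
  if all (pred1 j) s then (e ^_ size s)%:R * v j ^+ (e - size s) else 0.
Proof.
have -> : mderivs s ('X_j ^+ e : {mpoly R[i][n]}) =
    if all (pred1 j) s then (e ^_ size s)%:R *: 'X_j ^+ (e - size s) else 0.
  elim: s => [|l s IH] /=; first by rewrite ffactn0 subn0 scale1r.
  rewrite IH; case: (all _ s); rewrite ?andbT ?andbF ?mderiv0 //.
  rewrite mderivZ mderivXn eq_sym; case: eqP => _; last by rewrite scaler0.
  by rewrite scalerA -natrM -ffactnSr subnS.
by case: ifP; rewrite ?meval0 // mevalZ rmorphXn /= mevalXU.
Qed.

Definition mdiff {k} p z (vs : 'I_k -> 'cV[R[i]]_n) : R[i] :=
  \sum_(js : {ffun 'I_k -> 'I_n})
    (mderivs [seq js l | l <- enum 'I_k] p).@[pt z] * \prod_(l < k) vs l (js l) ord0.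

Lemma kderivE (F : polymap R n) k z (vs : 'I_k -> 'cV_n) :
  kderiv F z vs = \col_i mdiff (F i) z vs.
Proof. by []. Qed.

Lemma mdiffD k p q z (vs : 'I_k -> 'cV_n) :
  mdiff (p + q) z vs = mdiff p z vs + mdiff q z vs.
Proof.
by rewrite /mdiff -big_split; apply: eq_bigr => js _; rewrite mderivsD mevalD mulrDl.
Qed.

Lemma mdiffB k p q z (vs : 'I_k -> 'cV_n) :
  mdiff (p - q) z vs = mdiff p z vs - mdiff q z vs.
Proof.
rewrite /mdiff -sumrB; apply: eq_bigr => js _.
by rewrite mderivsB mevalB mulrBl.
Qed.

Lemma mdiffZ k c p z (vs : 'I_k -> 'cV_n) : mdiff (c *: p) z vs = c * mdiff p z vs.
Proof.
by rewrite /mdiff big_distrr; apply: eq_bigr => js _; rewrite mderivsZ mevalZ -mulrA.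
Qed.

Lemma mdiffXn k (j : 'I_n) (e : nat) z (vs : 'I_k -> 'cV_n) :
  mdiff ('X_j ^+ e) z vs = (e ^_ k)%:R * z j ord0 ^+ (e - k) * \prod_l vs l j ord0.
Proof.
rewrite /mdiff (bigD1 [ffun=> j]) //= [X in _ + X]big1 => [|js /negbTE js_neq].
  rewrite meval_mderivsXn all_pred1_ffun eqxx size_map size_enum_ord addr0.
  by congr (_ * _); apply: eq_bigr => l _; rewrite ffunE.
by rewrite meval_mderivsXn all_pred1_ffun js_neq mul0r.
Qed.

End IteratedDerivatives.

Lemma sum_prod_le_prod_sum (R : numDomainType) (I : finType) (k : nat)
    (x : 'I_k.+1 -> I -> R) :
  (forall l a, 0 <= x l a) -> \sum_a \prod_l x l a <= \prod_l \sum_a x l a.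
Proof.
elim: k x => [|k IH] x x_ge0.
  by rewrite big_ord1; under eq_bigr => a _ do rewrite big_ord1.
rewrite big_ord_recr /=; under eq_bigr => a _ do rewrite big_ord_recr /=.
have := IH (fun l => x (widen_ord (leqnSn k.+1) l)) (fun l => x_ge0 _).
have last_ge0 : 0 <= \sum_a x ord_max a by apply: sumr_ge0.
move=> /(ler_wpM2r last_ge0); apply: le_trans.
rewrite mulr_suml; apply: ler_sum => a _.
have x_le_sum : x ord_max a <= \sum_b x ord_max b.
  by rewrite (bigD1 a) //= lerDl sumr_ge0.
by rewrite ler_pM ?prodr_ge0 ?x_le_sum.
Qed.

Lemma sup_le_ge0 (R : realType) (S : set R) (c : R) :
  0 <= c -> (forall y, S y -> y <= c) -> sup S <= c.
Proof.
move=> c_ge0 S_le; have [S_neq0|S_eq0] := pselect (S !=set0)%classic.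
  exact: ge_sup.
suff -> : S = set0 by rewrite sup0.
by apply/seteqP; split => y // Sy; apply: S_eq0; exists y.
Qed.

Section EuclideanNorm.
Context {R : realType} {n : nat}.
Implicit Types (v : 'cV[R[i]]_n) (A : 'M[R[i]]_n).

Lemma normc_ge0 (x : R[i]) : 0 <= Normc.normc x.
Proof. by case: x => a b; exact: sqrtr_ge0. Qed.

Lemma normc_sum_le (f : 'I_n -> R[i]) :
  Normc.normc (\sum_j f j) <= \sum_j Normc.normc (f j).
Proof.
elim/big_ind2: _ => // [|x1 x2 y1 y2 le1 le2]; first by rewrite Normc.normc0.
exact: le_trans (le_normcD _ _) (lerD le1 le2).
Qed.

Lemma vnorm_ge0 v : 0 <= vnorm v.
Proof. exact: sqrtr_ge0. Qed.

Lemma vnorm_sqr v : vnorm v ^+ 2 = \sum_j Normc.normc (v j ord0) ^+ 2.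
Proof. by rewrite sqr_sqrtr // sumr_ge0 // => j _; rewrite sqr_ge0. Qed.

Lemma normc_le_vnorm v j : Normc.normc (v j ord0) <= vnorm v.
Proof.
rewrite -ler_sqr ?nnegrE ?normc_ge0 ?vnorm_ge0 // vnorm_sqr.
by rewrite (bigD1 j) //= lerDl sumr_ge0 // => l _; rewrite sqr_ge0.
Qed.

Lemma vnorm0 : vnorm (0 : 'cV[R[i]]_n) = 0.
Proof.
by rewrite /vnorm big1 ?sqrtr0 // => j _; rewrite mxE Normc.normc0 expr0n.
Qed.

Lemma vnorm_gt0 v : v != 0 -> 0 < vnorm v.
Proof.
move=> v_neq0; rewrite lt_def vnorm_ge0 andbT; apply: contra v_neq0 => /eqP v0.
have /psumr_eq0P v_eq0 : \sum_j Normc.normc (v j ord0) ^+ 2 = 0.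
  by rewrite -vnorm_sqr v0 expr0n.
apply/eqP/colP => j; rewrite mxE; apply: Normc.eq0_normc.
by apply/eqP; rewrite -sqrf_eq0; apply/eqP/v_eq0 => // l _; rewrite sqr_ge0.
Qed.

Lemma vnorm_mulmx_bounded A : exists K, forall v, vnorm (A *m v) <= K * vnorm v.
Proof.
pose r i := \sum_j Normc.normc (A i j).
exists (Num.sqrt (\sum_i r i ^+ 2)) => v.
have row_le i : Normc.normc ((A *m v) i ord0) <= r i * vnorm v.
  rewrite mxE; apply: le_trans (normc_sum_le _) _; rewrite /r mulr_suml.
  apply: ler_sum => j _; rewrite Normc.normcM.
  by rewrite ler_wpM2l ?normc_ge0 ?normc_le_vnorm.
rewrite -ler_sqr ?nnegrE ?mulr_ge0 ?vnorm_ge0 ?sqrtr_ge0 //.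
rewrite exprMn vnorm_sqr sqr_sqrtr ?sumr_ge0 // => [|i _]; last by rewrite sqr_ge0.
rewrite mulr_suml; apply: ler_sum => i _.
have r_ge0 : 0 <= r i by apply: sumr_ge0 => j _; exact: normc_ge0.
by rewrite -exprMn ler_sqr ?nnegrE ?normc_ge0 ?mulr_ge0 ?vnorm_ge0 ?row_le.
Qed.

Lemma sigma_has_ubound A :
  has_ubound [set r | exists v, v != 0 /\ r = vnorm (A *m v) / vnorm v].
Proof.
have [K A_le] := vnorm_mulmx_bounded A.
by exists K => _ [v [v_neq0 ->]]; rewrite ler_pdivrMr ?vnorm_gt0.
Qed.

Lemma sigma_ge0 A : 0 <= sigma A.
Proof.
have [[v v_neq0]|no_v] := pselect (exists v : 'cV[R[i]]_n, v != 0).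
  apply: le_trans (ub_le_sup (sigma_has_ubound A) _); last by exists v.
  by rewrite divr_ge0 ?vnorm_ge0.
rewrite /sigma (_ : [set r | _]%classic = set0) ?sup0 //.
by apply/seteqP; split => // r [v [v_neq0 _]]; apply: no_v; exists v.
Qed.

Lemma sigma_ub A v : vnorm (A *m v) <= sigma A * vnorm v.
Proof.
have [->|v_neq0] := eqVneq v 0; first by rewrite mulmx0 vnorm0 mulr0.
rewrite -ler_pdivrMr ?vnorm_gt0 //.
by apply: (ub_le_sup (sigma_has_ubound A)); exists v.
Qed.

Lemma sigma0 : sigma (0 : 'M[R[i]]_n) = 0.
Proof.
apply/eqP; rewrite eq_le sigma_ge0 andbT.
by apply: sup_le_ge0 => // _ [v [_ ->]]; rewrite mul0mx vnorm0 mul0r.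
Qed.

Lemma mlnorm_le k (L : ('I_k -> 'cV[R[i]]_n) -> 'cV[R[i]]_n) (c : R) :
  0 <= c -> (forall vs, vnorm (L vs) <= c * \prod_l vnorm (vs l)) -> mlnorm L <= c.
Proof.
move=> c_ge0 L_le; apply: sup_le_ge0 => // _ [vs [vs_neq0 ->]].
by rewrite ler_pdivrMr ?L_le // prodr_gt0 // => l _; apply: vnorm_gt0.
Qed.

Definition hadamard {k} (vs : 'I_k -> 'cV[R[i]]_n) : 'cV[R[i]]_n :=
  \col_(a < n) \prod_(l < k) vs l a ord0.

Lemma vnorm_hadamard_le k (vs : 'I_k -> 'cV[R[i]]_n) :
  (0 < k)%N -> vnorm (hadamard vs) <= \prod_l vnorm (vs l).
Proof.
case: k vs => // k vs _.
rewrite -ler_sqr ?nnegrE ?vnorm_ge0 ?prodr_ge0 // => [|l _]; last exact: vnorm_ge0.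
rewrite -prodrXl; under eq_bigr => l _ do rewrite vnorm_sqr.
rewrite vnorm_sqr /hadamard.
rewrite (eq_bigr (fun a => \prod_l Normc.normc (vs l a ord0) ^+ 2)) => [|a _].
  exact: sum_prod_le_prod_sum (fun l a => sqr_ge0 (Normc.normc (vs l a ord0))).
by rewrite mxE (big_morph _ (@Normc.normcM R) (@Normc.normc1 R)) -prodrXl.
Qed.

End EuclideanNorm.

Section RealRoots.
Context {R : realType}.

Lemma subrXX_le [b y : R] (m : nat) :
  0 <= y -> y <= b -> b ^+ m - y ^+ m <= (b - y) * (m%:R * b ^+ m.-1).
Proof.
move=> y_ge0 y_le_b; have b_ge0 := le_trans y_ge0 y_le_b.
rewrite subrXX; apply: ler_wpM2l; first by rewrite subr_ge0.
rewrite -[X in _ <= X](_ : \sum_(i < m) b ^+ m.-1 = _); last first.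
  by rewrite sumr_const card_ord mulr_natl.
apply: ler_sum => i _.
have i_le : (i <= m.-1)%N by rewrite -ltnS (ltn_predK (ltn_ord i)).
rewrite -[in leRHS](subnK i_le) exprD ler_wpM2l ?exprn_ge0 //.
by rewrite lerXn2r ?nnegrE.
Qed.

Lemma nroot_le (m : nat) (x c : R) :
  0 <= c -> (forall y, 0 <= y -> y ^+ m <= x -> y <= c) -> nroot m x <= c.
Proof. by move=> c_ge0 x_le; apply: sup_le_ge0 => // y [y_ge0 /x_le]; apply. Qed.

Lemma nroot_le0 (m : nat) (x : R) : (0 < m)%N -> x <= 0 -> nroot m x <= 0.
Proof.
move=> m_gt0 x_le0; apply: nroot_le => // y y_ge0 y_le.
have : y ^+ m = 0 by apply/eqP; rewrite eq_le (le_trans y_le x_le0) exprn_ge0.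
by move/eqP; rewrite expf_eq0 m_gt0 /= => /eqP ->.
Qed.

Lemma nroot_lt (m : nat) (x b : R) : 0 < b -> x < b ^+ m.+1 -> nroot m.+1 x < b.
Proof.
move=> b_gt0 x_lt.
set u := m.+1%:R * b ^+ m.
have u_gt0 : 0 < u by rewrite mulr_gt0 ?ltr0n ?exprn_gt0.
set d := (b ^+ m.+1 - x) / u.
have d_gt0 : 0 < d by rewrite divr_gt0 ?subr_gt0.
apply: (@le_lt_trans _ _ (Num.max 0 (b - d))); last by rewrite gt_max b_gt0 /=; lra.
apply: nroot_le => [|y y_ge0 y_le]; first by rewrite le_max lexx.
rewrite le_max; apply/orP; right.
have y_le_b : y <= b.
  rewrite leNgt; apply/negP => b_lt_y.
  have : b ^+ m.+1 < y ^+ m.+1 by rewrite ltrXn2r // ltW.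
  lra.
have := subrXX_le m.+1 y_ge0 y_le_b; rewrite -/u => gap.
have : d <= b - y by rewrite ler_pdivrMr //; lra.
lra.
Qed.

End RealRoots.

Lemma ord2P (i : 'I_2) : i = ord0 \/ i = ord_max.
Proof.
by case: i => [[|[|m]] lt_i2]; [left; apply: val_inj|right; apply: val_inj|].
Qed.

Lemma sum_ord2 (V : nmodType) (F : 'I_2 -> V) : \sum_(j < 2) F j = F ord0 + F ord_max.
Proof. by rewrite big_ord_recl big_ord1; congr (_ + F _); apply: val_inj. Qed.

Section Hmap.
Context {R : realType}.
Implicit Type z : 'cV[R[i]]_2.

Lemma jacobian_Hmap z : jacobian (@Hmap R) z = Jexpl z.
Proof.
apply/matrixP => i j; rewrite /Jexpl /mx22 !mxE.
by case: (ord2P i) => ->; case: (ord2P j) => ->;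
  rewrite /Hmap /= -[_^`M(_)]/(mderivs [:: _] _) -[X in _ - X]expr1
    mderivsB mderivsD mderivsZ !mevalB !mevalD !mevalZ !meval_mderivsXn /=
    !ffactn1 !subn1 /c4431 /pt /=; ring.
Qed.

Lemma kderiv_Hmap k z (vs : 'I_k -> 'cV[R[i]]_2) : (2 <= k)%N ->
  kderiv (@Hmap R) z vs = k`!%:R *: (Mk k z *m hadamard vs).
Proof.
move=> k_ge2; have linear_part_vanishes : (1 ^_ k = 0)%N by rewrite ffact_small.
apply/colP => i; rewrite kderivE /Mk /mx22 /hadamard !mxE sum_ord2 !mxE.
by case: (ord2P i) => ->; rewrite /Hmap /= -[X in _ - X]expr1 mdiffB mdiffD mdiffZ
  !mdiffXn linear_part_vanishes -!bin_ffact !natrM /=; ring.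
Qed.

Lemma Mk_eq0 k z : (6 < k)%N -> Mk k z = 0.
Proof.
move=> k_gt6; have k_gt3 : (3 < k)%N by apply: leq_trans k_gt6.
apply/matrixP => i j; rewrite /Mk /mx22 !mxE !bin_small // !mulr0 !mul0r.
by case: ifP; case: ifP.
Qed.

Lemma mlnorm_Hmap_le k z : (2 <= k)%N ->
  mlnorm (fun vs : 'I_k -> 'cV[R[i]]_2 =>
    (k`!%:R : R[i])^-1 *: (invmx (jacobian (@Hmap R) z) *m kderiv (@Hmap R) z vs))
  <= sigma (invmx (Jexpl z) *m Mk k z).
Proof.
move=> k_ge2; apply: mlnorm_le => [|vs]; first exact: sigma_ge0.
rewrite jacobian_Hmap kderiv_Hmap // -scalemxAr scalerA mulVf ?scale1r; last first.
  by rewrite pnatr_eq0 -lt0n fact_gt0.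
rewrite mulmxA; apply: le_trans (sigma_ub _ _) _.
by rewrite ler_wpM2l ?sigma_ge0 ?vnorm_hadamard_le // (leq_trans _ k_ge2).
Qed.

Lemma gamma_Hmap_lt z (b : R) : 0 < b ->
  (forall k, (2 <= k <= 6)%N -> sigma (invmx (Jexpl z) *m Mk k z) < b ^+ k.-1) ->
  gamma (@Hmap R) z < b.
Proof.
move=> b_gt0 sigma_lt.
pose g k := nroot k.-1 (mlnorm (fun vs : 'I_k -> 'cV[R[i]]_2 =>
  (k`!%:R : R[i])^-1 *: (invmx (jacobian (@Hmap R) z) *m kderiv (@Hmap R) z vs))).
have g_lt k : (2 <= k <= 6)%N -> g k < b.
  case: k => [|[|k]] // k_range; apply: nroot_lt => //.
  by apply: le_lt_trans (mlnorm_Hmap_le k.+2 z isT) _; apply: sigma_lt.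
have g_le0 k : (6 < k)%N -> g k <= 0.
  move=> k_gt6; have k_ge2 : (2 <= k)%N by apply: leq_trans k_gt6.
  apply: nroot_le0; first by case: k k_gt6 {k_ge2} => [|[|k]].
  by have := mlnorm_Hmap_le _ z k_ge2; rewrite Mk_eq0 // mulmx0 sigma0.
pose M := \big[Num.max/0]_(2 <= k < 7) g k.
have M_ge0 : 0 <= M by apply: bigmax_ge_id.
apply: (@le_lt_trans _ _ M).
  apply: sup_le_ge0 => // _ [k [k_ge2 ->]].
  have [k_le6|k_gt6] := leqP k 6; last exact: le_trans (g_le0 _ k_gt6) M_ge0.
  by apply: (le_bigmax_seq 0 k xpredT g); rewrite // mem_index_iota k_ge2.
rewrite /M big_nat_cond; apply: bigmax_lt => // k /andP[k_range _].
exact: g_lt.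
Qed.

End Hmap.

Theorem proposition5p1 (R : realType) (z : 'cV[R[i]]_2) :
  Jexpl z \in unitmx ->
  (forall k : nat, (2 <= k <= 6)%N ->
     sigma (invmx (Jexpl z) *m Mk k z)
       < (3%:R / 100%:R / vnorm (invmx (Jexpl z) *m peval (@Hmap R) z)) ^+ k.-1) ->
  alpha (@Hmap R) z < 3%:R / 100%:R.
Proof.
(* [invmx] is total, and the hypothesis and [alpha] involve the same
   [invmx (Jexpl z)]. *)
move=> _ sigma_lt.
set beta_z := vnorm _ in sigma_lt; set b := _ / beta_z in sigma_lt.
have b_gt0 : 0 < b.
  by have := sigma_lt 2%N isT; rewrite expr1; apply: le_lt_trans (sigma_ge0 _).
have beta_gt0 : 0 < beta_z.
  rewrite lt_def vnorm_ge0 andbT; apply: contraTneq b_gt0 => beta_eq0.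
  by rewrite /b beta_eq0 invr0 mulr0 ltxx.
rewrite /alpha /beta jacobian_Hmap -/beta_z.
have -> : 3%:R / 100%:R = beta_z * b :> R by rewrite /b [beta_z * _]mulrC divfK ?gt_eqF.
by rewrite ltr_pM2l // gamma_Hmap_lt.
Qed.
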